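(* Let $T$ be a reasonable test. Then for every $\vec f=(f,g)\in F\times F$, every $\epsilon\in(\frac12,1)$ and every measurable $A\subseteq\Omega^\infty$: if $f(A\cap R^{\vec f}_{T,\epsilon})>0$ then $g(A\cap R^{\vec f}_{T,\epsilon})>0$. Similarly, for every $\epsilon\in(0,\frac12)$: if $g(A\cap L^{\vec f}_{T,\epsilon})>0$ then $f(A\cap L^{\vec f}_{T,\epsilon})>0$.
   Context: Let $\Omega=\{0,1\}$, $\Omega^\infty$ the set of infinite sequences $\omega=(\omega_1,\omega_2,\dots)$, and $\omega^t=(\omega_1,\dots,\omega_t)$ (also used for the cylinder set of all sequences with this prefix; $\omega^0=\emptyset$). $\mathcal G_t$ is the $\sigma$-algebra generated by the length-$t$ cylinders and $\mathcal G_\infty$ the $\sigma$-algebra generated by all cylinders. $\Delta(\Omega)$ is the set of probability distributions on $\Omega$; for $p\in\Delta(\Omega)$ and $x\in\Omega$, $p[x]$ is the probability of $x$. A forecasting strategy is a map $f:\bigcup_{t\ge0}(\Omega\times\Delta(\Omega)\times\Delta(\Omega))^t\to\Delta(\Omega)$; $F$ is the set of all forecasting strategies. Given an ordered pair $\vec f=(f,g)\in F\times F$ and $\omega\in\Omega^\infty$, the play path $(\omega,\vec f)$ is defined recursively: $(\omega,\vec f)^0=\emptyset$ and its $t$-th entry is $(\omega_t,f((\omega,\vec f)^{t-1}),g((\omega,\vec f)^{t-1}))$. The pair $\vec f$ induces two probability measures on $(\Omega^\infty,\mathcal G_\infty)$, again denoted $f$ and $g$, determined by $f(\omega^t)=\prod_{n=1}^t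 f((\omega,\vec f)^{n-1})[\omega_n]$ and $g(\omega^t)=\prod_{n=1}^t g((\omega,\vec f)^{n-1})[\omega_n]$. A (cardinal comparison) test is a sequence $T=(T_t)_{t>0}$ of $\mathcal G_t$-measurable functions $T_t:(\Omega\times\Delta(\Omega)\times\Delta(\Omega))^\infty\to[0,1]$; write $T_t(\omega,\vec f)=T_t((\omega,\vec f))$ and $T(\omega,\vec f)=\lim_t T_t(\omega,\vec f)$ whenever the limit exists. For $\epsilon\in(0,1)$ let $L^{\vec f}_{T,\epsilon}=\{\omega:T(\omega,\vec f)\text{ exists and }>\epsilon\}$ and $R^{\vec f}_{T,\epsilon}=\{\omega:T(\omega,\vec f)\text{ exists and }<\epsilon\}$. $T$ is reasonable if for all $\vec f=(f,g)$ and measurable $A$: for $\epsilon\in(0,\frac12)$, if $g(A)>0$ and $f(A)<\frac{\epsilon}{1-\epsilon}g(A)$ then $g(A\cap R^{\vec f}_{T,\epsilon})>0$; and for $\epsilon\in(\frac12,1)$, if $f(A)>0$ and $g(A)<\frac{1-\epsilon}{\epsilon}f(A)$ then $f(A\cap L^{\vec f}_{T,\epsilon})>0$. *)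

From Stdlib Require Import Reals Lra List Classical ClassicalEpsilon.
Import ListNotations.
Open Scope R_scope.

(* Omega = {0,1} is bool (true = 1).  Omega^infinity = nat -> bool,
   with omega_{n+1} = w n. *)
Definition seqOmega := nat -> bool.

(* Delta(Omega): a distribution on {0,1}, given by the probability of 1. *)
Record dist := Dist { pr1 : R; pr1_range : 0 <= pr1 <= 1 }.
Definition prob (p : dist) (x : bool) : R := if x then pr1 p else 1 - pr1 p.

Definition entry := (bool * dist * dist)%type.
Definition history := list entry.

Definition strategy := history -> dist.

Definition play_step (f g : strategy) (h : history) (x : bool) : history :=
  h ++ [(x, f h, g h)].

Definition play_word (f g : strategy) (u : list bool) : history :=
  fold_left (play_step f g) u [].

Definition prefix (w : seqOmega) (t : nat) : list bool := map w (seq 0 t).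

Definition play_path (f g : strategy) (w : seqOmega) (t : nat) : history :=
  play_word f g (prefix w t).

(* Probability of the cylinder u under the measure induced by the
   forecaster chosen by [sel] (sel = fst-forecaster f or snd-forecaster g):
   prod_n sel((omega,f)^{n-1})[u_n]. *)
Definition cyl_mass (f g : strategy) (sel : strategy) (u : list bool) : R :=
  snd (fold_left
         (fun (hm : history * R) (x : bool) =>
            (play_step f g (fst hm) x, snd hm * prob (sel (fst hm)) x))
         u ([], 1)).

Definition in_cyl (u : list bool) (w : seqOmega) : Prop :=
  forall i, (i < length u)%nat -> w i = nth i u false.

Inductive measurable : (seqOmega -> Prop) -> Prop :=
| meas_cyl : forall u, measurable (in_cyl u)
| meas_compl : forall A, measurable A -> measurable (fun w => ~ A w)
| meas_union : forall As : nat -> seqOmega -> Prop,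
    (forall n, measurable (As n)) -> measurable (fun w => exists n, As n w)
| meas_ext : forall A B, measurable A -> (forall w, A w <-> B w) -> measurable B.

Definition is_glb (S : R -> Prop) (r : R) : Prop :=
  (forall s, S s -> r <= s) /\ (forall r', (forall s, S s -> r' <= s) -> r' <= r).
Definition inf (S : R -> Prop) : R := epsilon (inhabits 0) (is_glb S).

Definition cover_sums (f g sel : strategy) (A : seqOmega -> Prop) (s : R) : Prop :=
  exists c : nat -> list bool,
    (forall w, A w -> exists n, in_cyl (c n) w) /\
    infinite_sum (fun n => cyl_mass f g sel (c n)) s.

(* The (Caratheodory) extension of the cylinder premeasure; on G_infinity
   it is the unique probability measure with the given cylinder values. *)
Definition measure (f g sel : strategy) (A : seqOmega -> Prop) : R :=
  inf (cover_sums f g sel A).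

Definition muF (f g : strategy) (A : seqOmega -> Prop) : R := measure f g f A.
Definition muG (f g : strategy) (A : seqOmega -> Prop) : R := measure f g g A.

(* A test: T t is applied to the length-t prefix of the play path
   (G_t-measurability = dependence on the first t entries only),
   with values in [0,1]. *)
Definition test := nat -> history -> R.
Definition is_test (T : test) : Prop :=
  forall t h, (0 < t)%nat -> 0 <= T t h <= 1.

(* T_t(omega, f), t > 0, indexed from n = t - 1. *)
Definition T_seq (T : test) (f g : strategy) (w : seqOmega) (n : nat) : R :=
  T (S n) (play_path f g w (S n)).

Definition Lset_T (T : test) (f g : strategy) (eps : R) (w : seqOmega) : Prop :=
  exists l, Un_cv (T_seq T f g w) l /\ l > eps.
Definition Rset_T (T : test) (f g : strategy) (eps : R) (w : seqOmega) : Prop :=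
  exists l, Un_cv (T_seq T f g w) l /\ l < eps.

Definition inter (A B : seqOmega -> Prop) (w : seqOmega) : Prop := A w /\ B w.

Definition reasonable (T : test) : Prop :=
  forall (f g : strategy) (A : seqOmega -> Prop), measurable A ->
    (forall eps, 0 < eps < 1/2 ->
       muG f g A > 0 -> muF f g A < eps / (1 - eps) * muG f g A ->
       muG f g (inter A (Rset_T T f g eps)) > 0) /\
    (forall eps, 1/2 < eps < 1 ->
       muF f g A > 0 -> muG f g A < (1 - eps) / eps * muF f g A ->
       muF f g (inter A (Lset_T T f g eps)) > 0).

From Pilot Require Import Defs.
From Stdlib Require Import Reals Lra Lia List Classical ClassicalEpsilon.
Import ListNotations.
Open Scope R_scope.

(* For eps > 1/2 let B = A ∩ R_eps.  A limit cannot lie both below and above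
   eps, so B ∩ L_eps is empty and has measure 0.  The second clause of
   reasonableness applied to B therefore cannot have its hypothesis satisfied,
   i.e. g(B) >= (1 - eps)/eps f(B) > 0.  The case eps < 1/2 is symmetric.

   What remains is bookkeeping for the concrete model: B is in the
   sigma-algebra generated by cylinders (convergence to a limit below eps is a
   countable combination of conditions on finite prefixes), and the outer
   measure of the empty set is 0 (it is covered by the cylinders along which
   each forecast is followed by its less likely bit, of masses at most 2^-n). *)

Lemma measurable_True : measurable (fun _ => True).
Proof.
  apply meas_ext with (in_cyl []); [constructor|].
  intros w; split; [easy|]; intros _ i Hi; simpl in Hi; lia.
Qed.

Lemma measurable_False : measurable (fun _ => False).
Proof.
  apply meas_ext with (fun w => ~ True); [constructor; apply measurable_True|].
  tauto.
Qed.

Lemma measurable_in_cyl_and u (Q : Prop) : measurable (fun w => in_cyl u w /\ Q).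
Proof.
  destruct (classic Q) as [HQ|HQ].
  - apply meas_ext with (in_cyl u); [constructor|tauto].
  - apply meas_ext with (fun _ => False); [apply measurable_False|tauto].
Qed.

Lemma measurable_forall (A : nat -> seqOmega -> Prop) :
  (forall n, measurable (A n)) -> measurable (fun w => forall n, A n w).
Proof.
  intros HA; apply meas_ext with (fun w => ~ exists n, ~ A n w).
  - do 2 constructor; intros n; constructor; apply HA.
  - intros w; split.
    + intros H n; apply NNPP; intros Hn; apply H; eauto.
    + intros H [n Hn]; auto.
Qed.

Lemma measurable_and A B :
  measurable A -> measurable B -> measurable (fun w => A w /\ B w).
Proof.
  intros HA HB.
  apply meas_ext with (fun w => forall b : nat, (if (b =? 0)%nat then A else B) w).
  - apply measurable_forall; intros [|b]; assumption.
  - intros w; split.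
    + intros H; exact (conj (H 0%nat) (H 1%nat)).
    + intros [HAw HBw] [|b]; assumption.
Qed.

Definition agree (t : nat) (w w' : seqOmega) : Prop :=
  forall i, (i < t)%nat -> w i = w' i.

Definition determined (t : nat) (D : seqOmega -> Prop) : Prop :=
  forall w w', agree t w w' -> D w -> D w'.

Lemma agree_le t t' w w' : (t <= t')%nat -> agree t' w w' -> agree t w w'.
Proof. intros Ht H i Hi; apply H; lia. Qed.

Lemma agree_in_cyl u w w' : in_cyl u w -> in_cyl u w' -> agree (length u) w w'.
Proof. intros Hw Hw' i Hi; rewrite Hw, Hw'; auto. Qed.

Lemma length_prefix w t : length (prefix w t) = t.
Proof. unfold prefix; rewrite length_map, length_seq; reflexivity. Qed.

Lemma in_cyl_prefix w t : in_cyl (prefix w t) w.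
Proof.
  intros i Hi; rewrite length_prefix in Hi; unfold prefix.
  rewrite (nth_indep _ false (w 0%nat)) by (rewrite length_map, length_seq; exact Hi).
  rewrite map_nth, seq_nth; auto.
Qed.

Lemma prefix_agree t w w' : agree t w w' -> prefix w t = prefix w' t.
Proof.
  intros H; apply map_ext_in; intros i Hi; apply in_seq in Hi; apply H; lia.
Qed.

(* Binary coding of words, to enumerate the cylinders of a given length. *)
Fixpoint word_of_nat (t n : nat) : list bool :=
  match t with
  | O => []
  | S t' => Nat.testbit n 0 :: word_of_nat t' (n / 2)
  end.

Fixpoint nat_of_word (u : list bool) : nat :=
  match u with
  | [] => O
  | b :: u' => (Nat.b2n b + 2 * nat_of_word u')%nat
  end.

Lemma word_of_nat_of_word u : word_of_nat (length u) (nat_of_word u) = u.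
Proof.
  induction u as [|b u IH]; cbn [length word_of_nat nat_of_word]; [reflexivity|].
  rewrite Nat.add_b2n_double_bit0, Nat.add_b2n_double_div2, IH; reflexivity.
Qed.

Lemma length_word_of_nat t n : length (word_of_nat t n) = t.
Proof. revert n; induction t; intros n; simpl; auto. Qed.

Lemma measurable_determined t D : determined t D -> measurable D.
Proof.
  intros HD.
  apply meas_ext with (fun w => exists n, in_cyl (word_of_nat t n) w /\
                         exists w0, in_cyl (word_of_nat t n) w0 /\ D w0).
  - apply meas_union; intros n; apply measurable_in_cyl_and.
  - intros w; split.
    + intros [n [Hw [w0 [Hw0 HDw0]]]]; apply (HD w0 w); [|exact HDw0].
      rewrite <- (length_word_of_nat t n); exact (agree_in_cyl _ _ _ Hw0 Hw).
    + intros HDw; exists (nat_of_word (prefix w t)).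
      pose proof (word_of_nat_of_word (prefix w t)) as Hcode.
      rewrite length_prefix in Hcode; rewrite Hcode.
      split; [apply in_cyl_prefix|]; exists w; split; [apply in_cyl_prefix|exact HDw].
Qed.

(* The n-th term may depend on the first n+1 letters, as T_(n+1) does. *)
Definition adapted (s : seqOmega -> nat -> R) : Prop :=
  forall n w w', agree (S n) w w' -> s w n = s w' n.

Lemma adapted_T_seq T f g : adapted (T_seq T f g).
Proof.
  intros n w w' H; unfold T_seq, play_path; rewrite (prefix_agree _ _ _ H); reflexivity.
Qed.

Lemma inv_INR_S_pos m : 0 < / INR (S m).
Proof. apply Rinv_0_lt_compat, lt_0_INR; lia. Qed.

Lemma inv_INR_S_lt d : 0 < d -> exists m, / INR (S m) < d.
Proof.
  intros Hd; destruct (archimed_cor1 d Hd) as [N [HN HN0]].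
  exists (N - 1)%nat; replace (S (N - 1)) with N by lia; exact HN.
Qed.

Lemma cv_le_eventually u l N c :
  Un_cv u l -> (forall n, (N <= n)%nat -> u n <= c) -> l <= c.
Proof.
  intros Hu Hb; apply Rnot_lt_le; intros Hlt.
  destruct (Hu (l - c)) as [N' HN']; [lra|].
  specialize (HN' (max N N') ltac:(lia)); specialize (Hb (max N N') ltac:(lia)).
  apply Rabs_def2 in HN'; lra.
Qed.

(* Cauchy's criterion with tolerances 1/(m+1) only: quantifying over nat keeps
   the set of paths on which it holds measurable. *)
Definition Cauchy_crit_nat (u : nat -> R) : Prop :=
  forall m, exists N, forall p q, (N <= p)%nat -> (N <= q)%nat ->
    Rabs (u p - u q) < / INR (S m).

Lemma cv_iff_Cauchy_crit_nat u : (exists l, Un_cv u l) <-> Cauchy_crit_nat u.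
Proof.
  split.
  - intros [l Hl] m.
    destruct (CV_Cauchy u (exist _ l Hl) _ (inv_INR_S_pos m)) as [N HN].
    exists N; intros p q Hp Hq; apply HN; assumption.
  - intros Hu.
    assert (Hcrit : Cauchy_crit u).
    { intros e He; destruct (inv_INR_S_lt e He) as [m Hm]; destruct (Hu m) as [N HN].
      exists N; intros p q Hp Hq; specialize (HN p q Hp Hq); unfold Rdist; lra. }
    destruct (R_complete u Hcrit) as [l Hl]; eauto.
Qed.

Lemma cv_lt_iff u eps :
  (exists l, Un_cv u l /\ l < eps) <->
  Cauchy_crit_nat u /\
  exists m N, forall n, (N <= n)%nat -> u n <= eps - / INR (S m).
Proof.
  rewrite <- cv_iff_Cauchy_crit_nat; split.
  - intros [l [Hl Hlt]]; split; [eauto|].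
    destruct (inv_INR_S_lt ((eps - l) / 2)) as [m Hm]; [lra|].
    destruct (Hl _ (inv_INR_S_pos m)) as [N HN].
    exists m, N; intros n Hn; specialize (HN n Hn); apply Rabs_def2 in HN; lra.
  - intros [[l Hl] [m [N HN]]]; exists l; split; [exact Hl|].
    pose proof (cv_le_eventually _ _ _ _ Hl HN); pose proof (inv_INR_S_pos m); lra.
Qed.

Lemma measurable_cv_lt s eps :
  adapted s -> measurable (fun w => exists l, Un_cv (s w) l /\ l < eps).
Proof.
  intros Hs.
  eapply meas_ext; [apply measurable_and|intros w; symmetry; apply cv_lt_iff].
  - apply measurable_forall; intros m; apply meas_union; intros N.
    apply measurable_forall; intros p; apply measurable_forall; intros q.
    apply (measurable_determined (S (max p q))); intros w w' Hww' H Hp Hq.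
    rewrite <- (Hs p w w'), <- (Hs q w w') by (eapply agree_le; [|exact Hww']; lia).
    auto.
  - apply meas_union; intros m; apply meas_union; intros N.
    apply measurable_forall; intros n.
    apply (measurable_determined (S n)); intros w w' Hww' H Hn.
    rewrite <- (Hs n w w' Hww'); auto.
Qed.

Lemma measurable_cv_gt s eps :
  adapted s -> measurable (fun w => exists l, Un_cv (s w) l /\ l > eps).
Proof.
  intros Hs.
  apply meas_ext with (fun w => exists l, Un_cv (opp_seq (s w)) l /\ l < - eps).
  - apply measurable_cv_lt; intros n w w' H; unfold opp_seq; rewrite (Hs n w w' H); reflexivity.
  - intros w; split; intros [l [Hl Hlt]]; exists (- l); split; try lra.
    + apply (Un_cv_ext (opp_seq (opp_seq (s w)))); [intros n; apply Ropp_involutive|].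
      apply CV_opp; exact Hl.
    + apply CV_opp; exact Hl.
Qed.

Lemma measurable_Rset_T T f g eps : measurable (Rset_T T f g eps).
Proof. exact (measurable_cv_lt _ eps (adapted_T_seq T f g)). Qed.

Lemma measurable_Lset_T T f g eps : measurable (Lset_T T f g eps).
Proof. exact (measurable_cv_gt _ eps (adapted_T_seq T f g)). Qed.

Lemma Rset_Lset_T_disjoint T f g eps w :
  Rset_T T f g eps w -> Lset_T T f g eps w -> False.
Proof.
  intros [l1 [H1 Hlt]] [l2 [H2 Hgt]]; rewrite (UL_sequence _ _ _ H1 H2) in Hlt; lra.
Qed.

Lemma prob_nonneg p x : 0 <= prob p x.
Proof. destruct p as [a Ha], x; simpl; lra. Qed.

Lemma cyl_mass_snoc f g sel u x :
  cyl_mass f g sel (u ++ [x]) = cyl_mass f g sel u * prob (sel (play_word f g u)) x.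
Proof.
  unfold cyl_mass, play_word; rewrite fold_left_app; simpl; f_equal; f_equal.
  generalize (@nil entry) 1; induction u as [|y u IH]; intros h r; simpl; auto.
Qed.

Lemma cyl_mass_nonneg f g sel u : 0 <= cyl_mass f g sel u.
Proof.
  induction u as [|x u IH] using rev_ind; [unfold cyl_mass; simpl; lra|].
  rewrite cyl_mass_snoc; apply Rmult_le_pos; [exact IH|apply prob_nonneg].
Qed.

Definition less_likely (p : Defs.dist) : bool :=
  if Rle_dec (pr1 p) (1/2) then true else false.

Lemma prob_less_likely p : prob p (less_likely p) <= 1/2.
Proof. unfold less_likely; destruct (Rle_dec (pr1 p) (1/2)); simpl; lra. Qed.

Fixpoint greedy_word (f g sel : strategy) (k : nat) : list bool :=
  match k with
  | O => []
  | S k' => let u := greedy_word f g sel k' in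
            u ++ [less_likely (sel (play_word f g u))]
  end.

Lemma cyl_mass_greedy_word f g sel k :
  cyl_mass f g sel (greedy_word f g sel k) <= (1/2)^k.
Proof.
  induction k as [|k IH]; simpl; [unfold cyl_mass; simpl; lra|].
  rewrite cyl_mass_snoc.
  set (u := greedy_word f g sel k) in *; set (p := sel (play_word f g u)).
  pose proof (prob_less_likely p); pose proof (prob_nonneg p (less_likely p)).
  pose proof (cyl_mass_nonneg f g sel u); nra.
Qed.

Lemma cover_sums_nonneg f g sel A s : cover_sums f g sel A s -> 0 <= s.
Proof.
  intros [c [_ Hs]].
  apply Rle_trans with (sum_f_R0 (fun n => cyl_mass f g sel (c n)) 0).
  - apply cyl_mass_nonneg.
  - apply sum_incr; [exact Hs|intros n; apply cyl_mass_nonneg].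
Qed.

Lemma sum_half_pow_le n : sum_f_R0 (fun i => (1/2)^i) n <= 2.
Proof.
  rewrite tech3 by lra; pose proof (pow_lt (1/2) (S n) ltac:(lra)).
  replace ((1 - (1/2)^(S n)) / (1 - 1/2)) with (2 - 2 * (1/2)^(S n)) by field; lra.
Qed.

Lemma cover_sums_empty_le f g sel A K :
  (forall w, ~ A w) -> exists s, cover_sums f g sel A s /\ s <= 2 * (1/2)^K.
Proof.
  intros HA.
  set (a n := cyl_mass f g sel (greedy_word f g sel (n + K))).
  assert (Ha : forall n, 0 <= a n <= (1/2)^n * (1/2)^K).
  { intros n; split; [apply cyl_mass_nonneg|rewrite <- pow_add; apply cyl_mass_greedy_word]. }
  assert (HKle : 0 < (1/2)^K <= 1).
  { split; [apply pow_lt; lra|rewrite <- (pow1 K) at 2; apply pow_incr; lra]. }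
  destruct (Rseries_CV_comp a (fun n => (1/2)^n)) as [s Hs].
  - intros n; pose proof (Ha n); pose proof (pow_le (1/2) n ltac:(lra)); split; nra.
  - exists (/ (1 - 1/2)); apply (Un_cv_ext (sum_f_R0 (fun n => 1 * (1/2)^n))).
    + intros n; apply sum_eq; intros i _; ring.
    + apply GP_infinite; rewrite Rabs_pos_eq; lra.
  - exists s; split; [exists (fun n => greedy_word f g sel (n + K)); split; [|exact Hs]|].
    + intros w Hw; contradiction (HA w).
    + apply (cv_le_eventually _ _ 0%nat _ Hs); intros n _.
      apply Rle_trans with (sum_f_R0 (fun i => (1/2)^i * (1/2)^K) n).
      * apply sum_Rle; intros i _; apply Ha.
      * rewrite <- scal_sum, Rmult_comm; apply Rmult_le_compat_r; [lra|exact (sum_half_pow_le n)].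
Qed.

Lemma measure_empty f g sel A : (forall w, ~ A w) -> measure f g sel A = 0.
Proof.
  intros HA.
  assert (Hglb : is_glb (cover_sums f g sel A) 0).
  { split; [intros s Hs; exact (cover_sums_nonneg _ _ _ _ _ Hs)|].
    intros r Hr; apply Rnot_lt_le; intros Hpos.
    destruct (pow_lt_1_zero (1/2) ltac:(rewrite Rabs_pos_eq; lra) (r / 2) ltac:(lra))
      as [K HK].
    specialize (HK K (le_n K)); rewrite Rabs_pos_eq in HK by (apply pow_le; lra).
    destruct (cover_sums_empty_le f g sel A K HA) as [s [Hs Hle]].
    specialize (Hr s Hs); lra. }
  unfold measure, inf.
  destruct (epsilon_spec (inhabits 0) _ (ex_intro _ 0 Hglb)) as [Hlow Hgreat].
  destruct Hglb as [Hlow0 Hgreat0].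
  apply Rle_antisym; [apply Hgreat0, Hlow|apply Hgreat, Hlow0].
Qed.

Lemma reasonable_muG_ge T f g B eps :
  reasonable T -> measurable B -> 1/2 < eps < 1 ->
  (forall w, B w -> ~ Lset_T T f g eps w) ->
  muF f g B > 0 -> (1 - eps) / eps * muF f g B <= muG f g B.
Proof.
  intros Hr HB Heps Hdisj HF; apply Rnot_lt_le; intros Hlt.
  destruct (Hr f g B HB) as [_ HL]; specialize (HL eps Heps HF Hlt).
  unfold muF in HL; rewrite measure_empty in HL; [lra|].
  intros w [HBw HLw]; exact (Hdisj w HBw HLw).
Qed.

Lemma reasonable_muF_ge T f g B eps :
  reasonable T -> measurable B -> 0 < eps < 1/2 ->
  (forall w, B w -> ~ Rset_T T f g eps w) ->
  muG f g B > 0 -> eps / (1 - eps) * muG f g B <= muF f g B.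
Proof.
  intros Hr HB Heps Hdisj HG; apply Rnot_lt_le; intros Hlt.
  destruct (Hr f g B HB) as [HR _]; specialize (HR eps Heps HG Hlt).
  unfold muG in HR; rewrite measure_empty in HR; [lra|].
  intros w [HBw HRw]; exact (Hdisj w HBw HRw).
Qed.

Theorem mainTheorem14 (T : test) (HT : is_test T) (Hr : reasonable T) :
  forall (f g : strategy) (A : seqOmega -> Prop), measurable A ->
    (forall eps, 1/2 < eps < 1 ->
       muF f g (inter A (Rset_T T f g eps)) > 0 ->
       muG f g (inter A (Rset_T T f g eps)) > 0) /\
    (forall eps, 0 < eps < 1/2 ->
       muG f g (inter A (Lset_T T f g eps)) > 0 ->
       muF f g (inter A (Lset_T T f g eps)) > 0).
Proof.
  intros f g A HA; split; intros eps Heps Hpos.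
  - assert (Hge := reasonable_muG_ge T f g (inter A (Rset_T T f g eps)) eps Hr
      (measurable_and _ _ HA (measurable_Rset_T T f g eps)) Heps
      (fun w HB => Rset_Lset_T_disjoint T f g eps w (proj2 HB)) Hpos).
    assert (0 < (1 - eps) / eps) by (apply Rdiv_lt_0_compat; lra).
    nra.
  - assert (Hge := reasonable_muF_ge T f g (inter A (Lset_T T f g eps)) eps Hr
      (measurable_and _ _ HA (measurable_Lset_T T f g eps)) Heps
      (fun w HB HR => Rset_Lset_T_disjoint T f g eps w HR (proj2 HB)) Hpos).
    assert (0 < eps / (1 - eps)) by (apply Rdiv_lt_0_compat; lra).
    nra.
Qed.
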